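(* Let $a,b\in(0,1]$ and let $f:[0,1]\to[0,1]$ be $$f(x)=\begin{cases} x(1+a-ax), & 0\le x\le \tfrac12,\\ x(1-b+bx), & \tfrac12<x\le 1.\end{cases}$$ Let $x_0\in[0,1]\setminus\{\tfrac12\}$ and $x_i=f^i(x_0)$, and suppose the orbit $(x_i)_{i\ge0}$ avoids $\tfrac12$ (so that $f'(x_i)$ exists for all $i$). Then the Lyapunov exponent $$\lambda(x_0)=\lim_{n\to\infty}\frac1n\sum_{i=0}^{n-1}\ln|f'(x_i)|,$$ whenever this limit exists, is non-negative.
   Context: $f^i$ denotes the $i$-fold composition of $f$; $f$ is not differentiable at $\tfrac12$. *)

From Stdlib Require Import Reals List.
From Coquelicot Require Import Coquelicot.
Open Scope R_scope.

(* The piecewise map f_{a,b}, extended to all of R by the same formulas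
   (only its values / derivatives on [0,1] matter). *)
Definition fab (a b : R) (x : R) : R :=
  if Rle_dec x (1/2) then x * (1 + a - a * x) else x * (1 - b + b * x).

Definition orbit (a b x0 : R) (i : nat) : R := Nat.iter i (fab a b) x0.

Definition lyap_avg (a b x0 : R) (n : nat) : R :=
  / INR n * fold_right Rplus 0
    (map (fun i => ln (Rabs (Derive (fab a b) (orbit a b x0 i)))) (seq 0 n)).

(* Off the kink, f'(x) = 1 + a (1 - 2x) on the left branch and
   f'(x) = 1 + b (2x - 1) on the right one; both are >= 1 as soon as a, b >= 0.
   Hence every term ln |f'(x_i)| of the Lyapunov average is non-negative, so are
   the averages, and so is their limit. *)
From Stdlib Require Import Reals List Lra.
From Coquelicot Require Import Coquelicot.
Open Scope R_scope.

Lemma is_derive_fab_lt (a b x : R) : x < 1/2 ->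
  is_derive (fab a b) x (1 + a - 2 * a * x).
Proof.
  intros Hx.
  apply is_derive_ext_loc with (f := fun t => t * (1 + a - a * t)).
  - apply (filter_imp (fun t => t < 1/2)); [| exact (open_lt (1/2) x Hx)].
    intros t Ht; unfold fab.
    destruct (Rle_dec t (1/2)); [reflexivity | lra].
  - auto_derive; [exact I | ring].
Qed.

Lemma is_derive_fab_gt (a b x : R) : 1/2 < x ->
  is_derive (fab a b) x (1 - b + 2 * b * x).
Proof.
  intros Hx.
  apply is_derive_ext_loc with (f := fun t => t * (1 - b + b * t)).
  - apply (filter_imp (fun t => 1/2 < t)); [| exact (open_gt (1/2) x Hx)].
    intros t Ht; unfold fab.
    destruct (Rle_dec t (1/2)); [lra | reflexivity].
  - auto_derive; [exact I | ring].
Qed.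

Lemma Derive_fab_ge1 (a b x : R) : 0 <= a -> 0 <= b -> x <> 1/2 ->
  1 <= Derive (fab a b) x.
Proof.
  intros Ha Hb Hx.
  destruct (Rlt_dec x (1/2)) as [Hlt | Hge].
  - rewrite (is_derive_unique _ _ _ (is_derive_fab_lt a b x Hlt)); nra.
  - assert (Hgt : 1/2 < x) by lra.
    rewrite (is_derive_unique _ _ _ (is_derive_fab_gt a b x Hgt)); nra.
Qed.

Lemma fold_right_Rplus_nonneg (l : list R) :
  (forall y, In y l -> 0 <= y) -> 0 <= fold_right Rplus 0 l.
Proof.
  induction l as [| y l IH]; simpl; intros Hl; [lra |].
  assert (0 <= y) by (apply Hl; left; reflexivity).
  assert (0 <= fold_right Rplus 0 l) by (apply IH; intros z Hz; apply Hl; right; exact Hz).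
  lra.
Qed.

(* For n = 0 the average is [/ 0 * 0 = 0], so no positivity of n is needed. *)
Lemma lyap_avg_nonneg (a b x0 : R) (n : nat) : 0 <= a -> 0 <= b ->
  (forall i : nat, orbit a b x0 i <> 1/2) -> 0 <= lyap_avg a b x0 n.
Proof.
  intros Ha Hb Horb; unfold lyap_avg.
  apply Rmult_le_pos.
  - destruct n as [| n]; [simpl; rewrite Rinv_0; lra |].
    apply Rlt_le, Rinv_0_lt_compat, lt_0_INR; auto with arith.
  - apply fold_right_Rplus_nonneg; intros y Hy.
    apply in_map_iff in Hy; destruct Hy as [i [<- _]].
    pose proof (Derive_fab_ge1 a b _ Ha Hb (Horb i)) as Hd.
    rewrite Rabs_pos_eq by lra; rewrite <- ln_1; apply ln_le; lra.
Qed.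

Theorem proposition4p1 (a b x0 : R) (l : Rbar) :
  0 < a <= 1 -> 0 < b <= 1 ->
  0 <= x0 <= 1 -> x0 <> 1/2 ->
  (forall i : nat, orbit a b x0 i <> 1/2) ->
  is_lim_seq (lyap_avg a b x0) l ->
  Rbar_le 0 l.
Proof.
  intros Ha Hb _ _ Horb Hl.
  apply (is_lim_seq_le (fun _ => 0) (lyap_avg a b x0) 0 l);
    [| apply is_lim_seq_const | exact Hl].
  intros n; apply lyap_avg_nonneg; [lra | lra | exact Horb].
Qed.
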